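(* Let $T>0$, $L>0$, $\alpha\in\mathbb{R}\setminus\{0\}$, $n\ge2$ an integer, $x_0>L$, $0<t_0<T$, $\beta>0$, and $\psi(t,x)=(x-x_0)^2-\beta(t-t_0)^2$. Then there exist $\lambda_0>0$ and $C>0$ such that for all $\lambda>\lambda_0$ and all $v\in C_0^\infty((0,T)\times(0,L);\mathbb{R})$, $$\sum_{m=0}^{n-1}\int_0^T\!\!\int_0^L\lambda^{2n-2m-1}e^{2\lambda\psi}|\partial_x^m v|^2\,dx\,dt\le C\int_0^T\!\!\int_0^L e^{2\lambda\psi}\big|\alpha\partial_t v+\partial_x^n v\big|^2\,dx\,dt.$$ *)

From Stdlib Require Import Reals Lra Lia List.
From Coquelicot Require Import Coquelicot.
Open Scope R_scope.

(* Iterated partial derivative along a list of directions: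
   true = derivative in t (first variable), false = derivative in x (second).
   The head of the list is the last derivative applied. *)
Fixpoint pder (l : list bool) (f : R -> R -> R) : R -> R -> R :=
  match l with
  | nil => f
  | cons b l' =>
      let g := pder l' f in
      if b then (fun t x => Derive (fun s => g s x) t)
      else (fun t x => Derive (fun y => g t y) x)
  end.

Definition smooth2 (f : R -> R -> R) : Prop :=
  forall (l : list bool) (t x : R),
    ex_derive (fun s => pder l f s x) t /\
    ex_derive (fun y => pder l f t y) x /\
    continuity_2d_pt (pder l f) t x.

Definition C0inf_rect (T L : R) (v : R -> R -> R) : Prop :=
  smooth2 v /\
  exists a b c d : R,
    0 < a /\ a < b /\ b < T /\ 0 < c /\ c < d /\ d < L /\
    forall t x, ~ (a <= t <= b /\ c <= x <= d) -> v t x = 0.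

Definition dxn (m : nat) (v : R -> R -> R) : R -> R -> R :=
  fun t x => Derive_n (fun y => v t y) m x.

Definition dt (v : R -> R -> R) : R -> R -> R :=
  fun t x => Derive (fun s => v s x) t.

Definition int2 (T L : R) (f : R -> R -> R) : R :=
  RInt (fun t => RInt (fun x => f t x) 0 L) 0 T.

Definition psi (x0 t0 beta : R) (t x : R) : R :=
  (x - x0) ^ 2 - beta * (t - t0) ^ 2.

From Stdlib Require Import Reals Lra Lia List FunctionalExtensionality.
From Coquelicot Require Import Coquelicot.
Open Scope R_scope.

(* Fix a time t and put g = v(t,.), h = d_t v(t,.).  In L^2((0,L), e^{2 lam psi} dx) the adjoint
   of D = d_x is adj = -D - 2 lam psi_x.  Since psi_xx = 2, |Dy|^2 = |adj y|^2 + 4 lam |y|^2, and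
   since |psi_x| >= 2 (x0 - L) on [0, L], |Dy|^2 >= 4 lam^2 (x0 - L)^2 |y|^2.  Iterating, once lam
   is of order n the gap |D^n g|^2 - |adj^n g|^2 dominates 4 lam |D^(n-1) g|^2, which in turn
   dominates every lam^(2n-2m-1) |D^m g|^2.  Completing squares in |alpha h + D^n g|^2 and moving
   D^n onto h by duality leaves half that gap, the error alpha^2 lam^2 psi_t^2 |g|^2 (absorbed for
   large lam), and alpha times the time derivative of the integral of e^{2 lam psi} v d_x^n v,
   which integrates to zero because v vanishes at t = 0 and t = T. *)

Lemma continuity_identity : continuity (fun x => x).
Proof. apply derivable_continuous, derivable_id. Qed.

Lemma continuity_pow_fun (f : R -> R) (j : nat) :
  continuity f -> continuity (fun x => f x ^ j).
Proof.
  intros Hf. induction j as [|j IH]; simpl.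
  - apply continuity_const. intros ? ?; reflexivity.
  - apply (continuity_mult f (fun x => f x ^ j)); assumption.
Qed.

Lemma ex_derive_continuity (f : R -> R) :
  (forall x, ex_derive f x) -> continuity f.
Proof.
  intros H x. apply continuity_pt_filterlim.
  apply (ex_derive_continuous (K := R_AbsRing) (V := R_NormedModule)), H.
Qed.

Lemma ex_RInt_continuity (f : R -> R) a b : continuity f -> ex_RInt f a b.
Proof.
  intros H. apply (ex_RInt_continuous (V := R_CompleteNormedModule)).
  intros z _. apply continuity_pt_filterlim, H.
Qed.

Ltac continuity_tac :=
  repeat first
    [ assumption
    | apply continuity_plus | apply continuity_minus | apply continuity_mult
    | apply continuity_opp | apply continuity_identity | apply continuity_pow_fun
    | apply continuity_const; intros ? ?; reflexivity ].

Lemma RInt_plus_R (f g : R -> R) a b :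
  ex_RInt f a b -> ex_RInt g a b ->
  RInt (fun x => f x + g x) a b = RInt f a b + RInt g a b.
Proof. intros. apply (RInt_plus f g); assumption. Qed.

Lemma RInt_scal_R (f : R -> R) a b l :
  ex_RInt f a b -> RInt (fun x => l * f x) a b = l * RInt f a b.
Proof. intros. apply (RInt_scal f a b l); assumption. Qed.

Lemma RInt_ext_R (f g : R -> R) a b : (forall x, f x = g x) -> RInt f a b = RInt g a b.
Proof. intros H. apply RInt_ext. intros x _. apply H. Qed.

Lemma RInt_zero a b : RInt (fun _ => 0) a b = 0.
Proof. rewrite RInt_const. unfold scal; simpl; unfold mult; simpl; ring. Qed.

Lemma RInt_minus_R (f g : R -> R) a b :
  ex_RInt f a b -> ex_RInt g a b ->
  RInt (fun x => f x - g x) a b = RInt f a b - RInt g a b.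
Proof. intros. apply (RInt_minus f g); assumption. Qed.

Lemma is_derive_eq_R (f : R -> R) (x l l' : R) : is_derive f x l -> l = l' -> is_derive f x l'.
Proof. intros H <-. exact H. Qed.

Lemma is_derive_mult_R (f g : R -> R) x df dg :
  is_derive f x df -> is_derive g x dg ->
  is_derive (fun y => f y * g y) x (df * g x + f x * dg).
Proof. intros. apply (is_derive_mult f g); auto. intros; apply Rmult_comm. Qed.

Lemma RInt_derive_vanishing (F f : R -> R) a b :
  (forall x, is_derive F x (f x)) -> continuity f -> F a = 0 -> F b = 0 ->
  RInt f a b = 0.
Proof.
  intros HF Hf Ha Hb. apply is_RInt_unique.
  replace 0 with (minus (F b) (F a)) by (rewrite Ha, Hb; unfold minus, plus, opp; simpl; ring).
  apply (is_RInt_derive (V := R_CompleteNormedModule)); intros x _; [apply HF|].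
  apply continuity_pt_filterlim, Hf.
Qed.

Lemma RInt_le_of_null_defect (S J Q : R -> R) a b alpha :
  a <= b -> continuity S -> continuity J -> continuity Q -> RInt J a b = 0 ->
  (forall t, a <= t <= b -> S t + alpha * J t <= Q t) ->
  RInt S a b <= RInt Q a b.
Proof.
  intros Hab HS HJ HQ HJ0 Hle.
  assert (HSJ : RInt (fun t => S t + alpha * J t) a b = RInt S a b).
  { rewrite RInt_plus_R, RInt_scal_R, HJ0 by (apply ex_RInt_continuity; continuity_tac).
    lra. }
  rewrite <- HSJ. apply RInt_le; [assumption|apply ex_RInt_continuity; continuity_tac..|].
  intros t Ht. apply Hle. lra.
Qed.

Lemma sum_f_R0_first_le (f : nat -> R) N : (forall m, 0 <= f m) -> f 0%nat <= sum_f_R0 f N.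
Proof.
  intros Hf. induction N as [|N IH]; simpl; [lra|].
  specialize (Hf (S N)). lra.
Qed.

Definition smooth1 (g : R -> R) := forall j x, ex_derive (Derive_n g j) x.

Lemma smooth1_continuity g : smooth1 g -> continuity g.
Proof. intros H. apply ex_derive_continuity, (H 0%nat). Qed.

Lemma smooth1_Derive_n g j : smooth1 g -> smooth1 (Derive_n g j).
Proof.
  intros H i x. apply (ex_derive_ext (Derive_n g (i + j))); [|apply H].
  intros y. symmetry. apply Derive_n_comp.
Qed.

Section Weighted_line.

Variables lam x0 k L : R.
Hypotheses (Hlam : 0 < lam) (HL : 0 <= L) (HLx0 : L < x0).

(* At time [t], [weight] is [e^{2 lam psi(t, .)}] with [k = - beta (t - t0)^2]; [drift] is
   [lam psi_x]. *)
Definition weight x := exp (2 * lam * ((x - x0) ^ 2 + k)).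
Definition drift x := lam * (2 * (x - x0)).
Definition adj (g : R -> R) x := - Derive g x - 2 * drift x * g x.

Fixpoint adj_iter (j : nat) (g : R -> R) : R -> R :=
  match j with
  | O => g
  | S j' => adj_iter j' (adj g)
  end.

Definition wdot (g h : R -> R) : R := RInt (fun x => weight x * (g x * h x)) 0 L.
Definition wnorm2 g : R := wdot g g.

Definition admissible g := smooth1 g /\ forall j, Derive_n g j 0 = 0 /\ Derive_n g j L = 0.

Lemma is_derive_weight x : is_derive weight x (2 * drift x * weight x).
Proof.
  unfold weight, drift. auto_derive; [auto|].
  match goal with |- _ * exp ?A = _ * exp ?B => replace A with B by ring end. ring.
Qed.

Lemma weight_pos x : 0 < weight x.
Proof. apply exp_pos. Qed.

Lemma continuity_weight : continuity weight.
Proof. apply ex_derive_continuity. intro x. eexists. apply is_derive_weight. Qed.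

Lemma continuity_drift : continuity drift.
Proof. unfold drift. continuity_tac. Qed.

Lemma admissible_continuity g : admissible g -> continuity g.
Proof. intros [H _]. apply smooth1_continuity, H. Qed.

Lemma admissible_Derive_n g j : admissible g -> admissible (Derive_n g j).
Proof.
  intros [Hs He]. split; [apply smooth1_Derive_n, Hs|].
  intros i. rewrite !Derive_n_comp. apply He.
Qed.

Lemma admissible_Derive g : admissible g -> admissible (Derive g).
Proof. apply (admissible_Derive_n g 1). Qed.

Lemma is_derive_adj_combination (A B C : R -> R) a x :
  ex_derive A x -> ex_derive B x -> ex_derive C x ->
  is_derive (fun y => - A y - 2 * drift y * B y - a * C y) x
    (- Derive A x - 4 * lam * B x - 2 * drift x * Derive B x - a * Derive C x).
Proof.
  intros HA HB HC. unfold drift. auto_derive.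
  - repeat split; assumption.
  - change (fun y => A y) with A; change (fun y => B y) with B;
      change (fun y => C y) with C. ring.
Qed.

(* Moving [D] across [adj] costs [- 4 lam], because [drift' = 2 lam]. *)
Lemma Derive_n_adj g j x : smooth1 g ->
  Derive_n (adj g) j x = - Derive_n g (S j) x - 2 * drift x * Derive_n g j x
                         - 4 * lam * INR j * Derive_n g (pred j) x.
Proof.
  intros Hg. revert x. induction j as [|j IH]; intro x.
  - simpl. unfold adj. change (fun y => g y) with g. ring.
  - change (Derive_n (adj g) (S j) x) with (Derive (Derive_n (adj g) j) x).
    rewrite (Derive_ext _ _ x IH). apply is_derive_unique.
    replace (- Derive_n g (S (S j)) x - 2 * drift x * Derive_n g (S j) x
             - 4 * lam * INR (S j) * Derive_n g (pred (S j)) x)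
      with (- Derive (Derive_n g (S j)) x - 4 * lam * Derive_n g j x
            - 2 * drift x * Derive (Derive_n g j) x
            - 4 * lam * INR j * Derive (Derive_n g (pred j)) x).
    + apply is_derive_adj_combination; apply Hg.
    + rewrite S_INR. destruct j; cbn [Nat.pred INR Derive_n]; ring.
Qed.

Lemma adj_Derive g x : smooth1 g -> adj (Derive g) x = Derive (adj g) x + 4 * lam * g x.
Proof.
  intros Hg. change (Derive (adj g) x) with (Derive_n (adj g) 1 x).
  rewrite Derive_n_adj by assumption. unfold adj. cbn [Derive_n Nat.pred INR].
  change (fun y => g y) with g. change (fun y => Derive g y) with (Derive g). ring.
Qed.

Lemma admissible_adj g : admissible g -> admissible (adj g).
Proof.
  intros [Hs He]. split.
  - intros j x. apply (ex_derive_ext (fun y => - Derive_n g (S j) y - 2 * drift y * Derive_n g j y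
                                        - 4 * lam * INR j * Derive_n g (pred j) y)).
    + intros y. symmetry. apply Derive_n_adj, Hs.
    + eexists. apply is_derive_adj_combination; apply Hs.
  - intros j. rewrite !Derive_n_adj by assumption.
    destruct (He (S j)) as [-> ->], (He j) as [-> ->], (He (pred j)) as [-> ->]. split; ring.
Qed.

Lemma admissible_adj_iter j g : admissible g -> admissible (adj_iter j g).
Proof. revert g. induction j; intros g H; simpl; auto using admissible_adj. Qed.

Lemma wdot_comm g h : wdot g h = wdot h g.
Proof. unfold wdot. apply RInt_ext_R. intros; ring. Qed.

Lemma wdot_ext g g' h h' :
  (forall x, g x = g' x) -> (forall x, h x = h' x) -> wdot g h = wdot g' h'.
Proof. intros Hg Hh. unfold wdot. apply RInt_ext_R. intros x. rewrite Hg, Hh. ring. Qed.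

(* A weighted integrand given as a list of [(coefficient, u, v)], so that linearity of [wdot]
   is applied in one step. *)
Fixpoint wsum (l : list (R * (R -> R) * (R -> R))) (x : R) : R :=
  match l with
  | nil => 0
  | (a, u, v) :: l' => a * (weight x * (u x * v x)) + wsum l' x
  end.

Fixpoint wdot_sum (l : list (R * (R -> R) * (R -> R))) : R :=
  match l with
  | nil => 0
  | (a, u, v) :: l' => a * wdot u v + wdot_sum l' end.

Lemma RInt_wsum l :
  List.Forall (fun e => continuity (snd (fst e)) /\ continuity (snd e)) l ->
  (RInt (wsum l) 0 L : R) = wdot_sum l.
Proof.
  pose proof continuity_weight as Cw.
  induction l as [|[[a u] v] l IH]; intros H; simpl.
  - apply RInt_zero.
  - inversion H as [|? ? [Hu Hv] Hl]; subst; simpl in Hu, Hv.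
    assert (Cl : continuity (wsum l)).
    { clear IH H. induction l as [|[[b u'] v'] l IHl]; simpl; continuity_tac;
        inversion Hl as [|? ? [? ?] ?]; auto. }
    rewrite (RInt_plus_R (fun x => a * (weight x * (u x * v x)))), RInt_scal_R, IH;
      try reflexivity; try assumption; apply ex_RInt_continuity; continuity_tac.
Qed.

Ltac wsum_tac :=
  rewrite RInt_wsum; [cbn [wdot_sum]; ring|];
  repeat (apply List.Forall_cons; [cbn [fst snd]; split; continuity_tac|]); apply List.Forall_nil.

Lemma wdot_add_scal_r g h1 h2 a :
  continuity g -> continuity h1 -> continuity h2 ->
  wdot g (fun x => h1 x + a * h2 x) = wdot g h1 + a * wdot g h2.
Proof.
  intros Hg H1 H2. unfold wdot at 1.
  rewrite (RInt_ext_R _ (wsum ((1, g, h1) :: (a, g, h2) :: nil))) by (intros; simpl; ring).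
  wsum_tac.
Qed.

Lemma wnorm2_sub_scal u v a : continuity u -> continuity v ->
  wnorm2 (fun x => u x - a * v x) = wnorm2 u - 2 * a * wdot u v + a ^ 2 * wnorm2 v.
Proof.
  intros Hu Hv. unfold wnorm2, wdot at 1.
  rewrite (RInt_ext_R _ (wsum ((1, u, u) :: (- 2 * a, u, v) :: (a ^ 2, v, v) :: nil)))
    by (intros; simpl; ring).
  wsum_tac.
Qed.

Lemma wnorm2_ge_0 g : continuity g -> 0 <= wnorm2 g.
Proof.
  intros Hg. apply RInt_ge_0; [assumption|apply ex_RInt_continuity|].
  - pose proof continuity_weight. continuity_tac.
  - intros x _. pose proof (weight_pos x). apply Rmult_le_pos; nra.
Qed.

Lemma admissible_ex_derive g x : admissible g -> ex_derive g x.
Proof. intros [H _]. apply (H 0%nat). Qed.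

Lemma admissible_ends g : admissible g -> g 0 = 0 /\ g L = 0.
Proof. intros [_ H]. apply (H 0%nat). Qed.

Lemma wdot_Derive_l g h : admissible g -> admissible h -> wdot (Derive g) h = wdot g (adj h).
Proof.
  intros Hg Hh.
  pose proof (admissible_continuity _ Hg) as Cg.
  pose proof (admissible_continuity _ Hh) as Ch.
  pose proof (admissible_continuity _ (admissible_Derive _ Hg)) as Cdg.
  pose proof (admissible_continuity _ (admissible_adj _ Hh)) as Cah.
  pose proof continuity_weight as Cw.
  assert (Hflux : RInt (fun x => weight x * (Derive g x * h x) - weight x * (g x * adj h x)) 0 L
                  = 0).
  { destruct (admissible_ends g Hg) as [Hg0 HgL].
    apply (RInt_derive_vanishing (fun x => weight x * (g x * h x))).
    - intros x. eapply is_derive_eq_R.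
      + apply is_derive_mult_R; [apply is_derive_weight|].
        apply is_derive_mult_R; apply Derive_correct, admissible_ex_derive; assumption.
      + unfold adj. ring.
    - continuity_tac.
    - rewrite Hg0. ring.
    - rewrite HgL. ring. }
  rewrite RInt_minus_R in Hflux by (apply ex_RInt_continuity; continuity_tac).
  unfold wdot. lra.
Qed.

Lemma wnorm2_Derive y :
  admissible y -> wnorm2 (Derive y) = wnorm2 (adj y) + 4 * lam * wnorm2 y.
Proof.
  intros Hy. pose proof (admissible_adj _ Hy) as Hay.
  unfold wnorm2. rewrite wdot_Derive_l by auto using admissible_Derive.
  rewrite (wdot_ext y y _ (fun x => Derive (adj y) x + 4 * lam * y x))
    by (intros; first [reflexivity | apply adj_Derive, (proj1 Hy)]).
  rewrite wdot_add_scal_r by (apply admissible_continuity; auto using admissible_Derive).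
  rewrite wdot_comm, wdot_Derive_l by assumption. reflexivity.
Qed.

Lemma is_derive_drift x : is_derive drift x (2 * lam).
Proof. unfold drift. auto_derive; [auto|ring]. Qed.

Lemma wnorm2_Derive_lower g :
  admissible g -> 4 * lam ^ 2 * (x0 - L) ^ 2 * wnorm2 g <= wnorm2 (Derive g).
Proof.
  intros Hg.
  pose proof (admissible_continuity _ Hg) as Cg.
  pose proof (admissible_continuity _ (admissible_Derive _ Hg)) as Cdg.
  pose proof continuity_weight as Cw. pose proof continuity_drift as Ca.
  set (c0 := 4 * lam ^ 2 * (x0 - L) ^ 2).
  (* Integrating [(weight * drift * g^2)'] gives
     [|g'|^2 = |g' + drift g|^2 + |drift g|^2 + 2 lam |g|^2], and [|drift| >= 2 lam (x0 - L)]. *)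
  set (flux' := fun x => 2 * drift x * weight x * (drift x * g x ^ 2)
                        + weight x * (2 * lam * g x ^ 2 + drift x * (2 * g x * Derive g x))).
  assert (Hflux : RInt flux' 0 L = 0).
  { destruct (admissible_ends g Hg) as [Hg0 HgL].
    apply (RInt_derive_vanishing (fun x => weight x * (drift x * g x ^ 2))).
    - intros x. eapply is_derive_eq_R.
      + apply is_derive_mult_R; [apply is_derive_weight|].
        apply is_derive_mult_R; [apply is_derive_drift|].
        apply is_derive_pow, Derive_correct, admissible_ex_derive, Hg.
      + unfold flux'. simpl. ring.
    - unfold flux'. continuity_tac.
    - rewrite Hg0. ring.
    - rewrite HgL. ring. }
  unfold wnorm2, wdot. rewrite <- RInt_scal_R by (apply ex_RInt_continuity; continuity_tac).
  apply (RInt_le_of_null_defect _ flux' _ 0 L (-1)); try assumption;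
    try (unfold flux'; continuity_tac).
  intros x Hx. pose proof (weight_pos x) as Hw.
  assert (Hc0 : c0 <= drift x ^ 2).
  { assert ((x0 - L) ^ 2 <= (x - x0) ^ 2) by nra. unfold c0, drift. nra. }
  assert (E : weight x * (Derive g x * Derive g x) - (c0 * (weight x * (g x * g x)) + -1 * flux' x)
              = weight x * (Derive g x + drift x * g x) ^ 2
                + (drift x ^ 2 - c0) * (weight x * g x ^ 2) + 2 * lam * (weight x * g x ^ 2))
    by (unfold flux'; ring).
  assert (0 <= weight x * (Derive g x + drift x * g x) ^ 2)
    by (apply Rmult_le_pos; [lra | apply pow2_ge_0]).
  assert (0 <= weight x * g x ^ 2) by (apply Rmult_le_pos; [lra | apply pow2_ge_0]).
  assert (0 <= (drift x ^ 2 - c0) * (weight x * g x ^ 2)) by (apply Rmult_le_pos; lra).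
  assert (0 <= 2 * lam * (weight x * g x ^ 2)) by (apply Rmult_le_pos; lra).
  lra.
Qed.

Lemma wnorm2_Derive_n_adj_le z j : admissible z ->
  INR j * (4 * lam) <= 8 * lam ^ 2 * (x0 - L) ^ 2 ->
  4 * lam * wnorm2 (Derive_n z j) <= wnorm2 (Derive_n z (S j)) - wnorm2 (Derive_n (adj z) j).
Proof.
  intros Hz Hj. destruct j as [|i].
  - change (wnorm2 (Derive_n z 1)) with (wnorm2 (Derive z)).
    change (wnorm2 (Derive_n z 0)) with (wnorm2 z).
    change (wnorm2 (Derive_n (adj z) 0)) with (wnorm2 (adj z)).
    rewrite wnorm2_Derive by assumption. lra.
  - set (x := Derive_n z i). set (y := Derive x).
    assert (Hx : admissible x) by (apply admissible_Derive_n, Hz).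
    assert (Hy : admissible y) by (apply admissible_Derive, Hx).
    pose proof (admissible_continuity _ Hx) as Cx.
    pose proof (admissible_continuity _ (admissible_adj _ Hy)) as Cay.
    set (kappa := 4 * lam * INR (S i)).
    assert (Hshift : wnorm2 (Derive_n (adj z) (S i)) = wnorm2 (fun t => adj y t - kappa * x t)).
    { unfold wnorm2. apply wdot_ext; intro t; rewrite Derive_n_adj by apply Hz;
        unfold adj, kappa, y, x; cbn [Nat.pred]; reflexivity. }
    assert (Hxy : wdot (adj y) x = wnorm2 y).
    { rewrite wdot_comm, <- wdot_Derive_l by assumption. reflexivity. }
    change (Derive_n z (S (S i))) with (Derive y).
    change (Derive_n z (S i)) with y.
    rewrite Hshift, wnorm2_sub_scal, Hxy, wnorm2_Derive by assumption.
    pose proof (wnorm2_Derive_lower x Hx) as Hlow. fold y in Hlow.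
    pose proof (wnorm2_ge_0 x Cx) as Nx.
    assert (Hk : 0 <= kappa) by (apply Rmult_le_pos; [lra | apply pos_INR]).
    assert (Hkx : kappa * wnorm2 x <= 2 * wnorm2 y).
    { apply Rle_trans with (2 * (4 * lam ^ 2 * (x0 - L) ^ 2) * wnorm2 x); [|lra].
      apply Rmult_le_compat_r; [exact Nx | unfold kappa; lra]. }
    assert (0 <= kappa * (2 * wnorm2 y - kappa * wnorm2 x)) by (apply Rmult_le_pos; lra).
    lra.
Qed.

Lemma wnorm2_adj_iter_le z j : admissible z ->
  INR j * (4 * lam) <= 8 * lam ^ 2 * (x0 - L) ^ 2 ->
  wnorm2 (adj_iter j z) <= wnorm2 (Derive_n z j).
Proof.
  revert z. induction j as [|j IH]; intros z Hz Hj.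
  - apply Rle_refl.
  - assert (Hj' : INR j * (4 * lam) <= 8 * lam ^ 2 * (x0 - L) ^ 2)
      by (rewrite S_INR in Hj; lra).
    simpl adj_iter. eapply Rle_trans; [apply IH; auto using admissible_adj|].
    pose proof (wnorm2_Derive_n_adj_le z j Hz Hj').
    pose proof (wnorm2_ge_0 _ (admissible_continuity _ (admissible_Derive_n z j Hz))).
    assert (0 <= 4 * lam * wnorm2 (Derive_n z j)) by (apply Rmult_le_pos; lra).
    lra.
Qed.

Lemma wnorm2_Derive_n_gap g m : admissible g ->
  INR m * (4 * lam) <= 8 * lam ^ 2 * (x0 - L) ^ 2 ->
  4 * lam * wnorm2 (Derive_n g m) <= wnorm2 (Derive_n g (S m)) - wnorm2 (adj_iter (S m) g).
Proof.
  intros Hg Hm.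
  pose proof (wnorm2_Derive_n_adj_le g m Hg Hm).
  pose proof (wnorm2_adj_iter_le (adj g) m (admissible_adj g Hg) Hm).
  simpl adj_iter. lra.
Qed.

Lemma wnorm2_Derive_n_growth g m j : admissible g ->
  (4 * lam ^ 2 * (x0 - L) ^ 2) ^ j * wnorm2 (Derive_n g m) <= wnorm2 (Derive_n g (m + j)).
Proof.
  intros Hg. induction j as [|j IH].
  - rewrite Nat.add_0_r. simpl. lra.
  - rewrite Nat.add_succ_r. simpl pow. rewrite Rmult_assoc.
    eapply Rle_trans; [|apply (wnorm2_Derive_lower _ (admissible_Derive_n g (m + j) Hg))].
    apply Rmult_le_compat_l; [|exact IH].
    apply Rmult_le_pos; [nra | apply pow2_ge_0].
Qed.

Definition carleman_const n := INR n * (/ (4 * (x0 - L) ^ 2) + 1) ^ n.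

Lemma carleman_const_pos n : (1 <= n)%nat -> 0 < carleman_const n.
Proof.
  intros Hn. unfold carleman_const.
  assert (0 < / (4 * (x0 - L) ^ 2)) by (apply Rinv_0_lt_compat; nra).
  apply Rmult_lt_0_compat; [apply lt_0_INR; lia | apply pow_lt; lra].
Qed.

Lemma weighted_term_le g n m : admissible g -> (1 <= n)%nat -> (m <= n - 1)%nat ->
  lam ^ (2 * n - 2 * m - 1) * wnorm2 (Derive_n g m)
  <= lam * (/ (4 * (x0 - L) ^ 2) + 1) ^ n * wnorm2 (Derive_n g (n - 1)).
Proof.
  intros Hg Hn Hm. set (j := (n - 1 - m)%nat).
  set (d := 4 * (x0 - L) ^ 2). assert (Hd : 0 < d) by (unfold d; nra).
  pose proof (wnorm2_Derive_n_growth g m j Hg) as Hgrow.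
  replace (m + j)%nat with (n - 1)%nat in Hgrow by (unfold j; lia).
  replace (4 * lam ^ 2 * (x0 - L) ^ 2) with (d * lam ^ 2) in Hgrow by (unfold d; ring).
  rewrite Rpow_mult_distr in Hgrow.
  set (Nm := wnorm2 (Derive_n g m)) in *. set (Nn := wnorm2 (Derive_n g (n - 1))) in *.
  assert (HNn : 0 <= Nn) by (apply wnorm2_ge_0, admissible_continuity, admissible_Derive_n, Hg).
  assert (Hdj : 0 < d ^ j) by (apply pow_lt, Hd).
  assert (Hlam_j : (lam ^ 2) ^ j * Nm <= (/ d) ^ j * Nn).
  { rewrite pow_inv. apply (Rmult_le_reg_l (d ^ j)); [assumption|].
    rewrite <- Rmult_assoc, <- (Rmult_assoc (d ^ j) (/ d ^ j)), Rinv_r, Rmult_1_l by lra.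
    exact Hgrow. }
  assert (HK : (/ d) ^ j <= (/ d + 1) ^ n).
  { assert (0 < / d) by (apply Rinv_0_lt_compat, Hd).
    apply Rle_trans with ((/ d + 1) ^ j).
    - apply pow_incr. lra.
    - apply Rle_pow; [lra | unfold j; lia]. }
  replace (2 * n - 2 * m - 1)%nat with (S (2 * j)) by (unfold j; lia).
  rewrite <- tech_pow_Rmult, pow_mult, !Rmult_assoc.
  apply Rmult_le_compat_l; [lra|].
  eapply Rle_trans; [exact Hlam_j|]. apply Rmult_le_compat_r; assumption.
Qed.

Lemma weighted_sum_le g n : admissible g -> (1 <= n)%nat ->
  sum_f_R0 (fun m => lam ^ (2 * n - 2 * m - 1) * wnorm2 (Derive_n g m)) (n - 1)
  <= carleman_const n * (lam * wnorm2 (Derive_n g (n - 1))).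
Proof.
  intros Hg Hn.
  eapply Rle_trans.
  - apply (sum_Rle _ (fun _ => lam * (/ (4 * (x0 - L) ^ 2) + 1) ^ n
                              * wnorm2 (Derive_n g (n - 1)))).
    intros m Hm. apply weighted_term_le; assumption.
  - rewrite sum_cte. replace (S (n - 1)) with n by lia. unfold carleman_const. right; ring.
Qed.

Lemma wdot_adj_iter j g h :
  admissible g -> admissible h -> wdot (adj_iter j g) h = wdot g (Derive_n h j).
Proof.
  revert g. induction j as [|j IH]; intros g Hg Hh.
  - apply wdot_ext; reflexivity.
  - simpl adj_iter. rewrite IH by auto using admissible_adj.
    rewrite wdot_comm, <- wdot_Derive_l by auto using admissible_Derive_n.
    rewrite wdot_comm. reflexivity.
Qed.

Lemma wnorm2_add_completed_squares g h Y Z alpha q :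
  continuity g -> continuity h -> continuity Y -> continuity Z ->
  wnorm2 (fun x => alpha * h x + Y x)
  = / 2 * wnorm2 (fun x => alpha * h x + Y x - alpha * q * g x)
    + / 2 * wnorm2 (fun x => alpha * (h x + q * g x) - Z x)
    + / 2 * (wnorm2 Y - wnorm2 Z)
    + alpha * (wdot h Y + q * wdot g Y + wdot Z h + q * wdot Z g)
    - alpha ^ 2 * q ^ 2 * wnorm2 g.
Proof.
  intros Cg Ch CY CZ. unfold wnorm2. unfold wdot at 1.
  rewrite (RInt_ext_R _ (wsum
      ((/ 2, fun x => alpha * h x + Y x - alpha * q * g x,
             fun x => alpha * h x + Y x - alpha * q * g x)
       :: (/ 2, fun x => alpha * (h x + q * g x) - Z x, fun x => alpha * (h x + q * g x) - Z x)
       :: (/ 2, Y, Y) :: (- / 2, Z, Z) :: (alpha, h, Y) :: (alpha * q, g, Y)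
       :: (alpha, Z, h) :: (alpha * q, Z, g) :: (- (alpha ^ 2 * q ^ 2), g, g) :: nil)))
    by (intros; simpl; field).
  wsum_tac.
Qed.

Lemma weighted_sum_div_bounds g n alpha q :
  admissible g -> (1 <= n)%nat -> alpha ^ 2 * q ^ 2 * carleman_const n <= lam ^ (2 * n - 1) ->
  alpha ^ 2 * q ^ 2 * wnorm2 g
  <= sum_f_R0 (fun m => lam ^ (2 * n - 2 * m - 1) * wnorm2 (Derive_n g m)) (n - 1)
     / carleman_const n
  <= lam * wnorm2 (Derive_n g (n - 1)).
Proof.
  intros Hg Hn Hq.
  pose proof (carleman_const_pos n Hn) as HC.
  pose proof (weighted_sum_le g n Hg Hn) as Hsum.
  set (C := carleman_const n) in *. set (Ssum := sum_f_R0 _ (n - 1)) in *.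
  assert (Hfirst : lam ^ (2 * n - 1) * wnorm2 g <= Ssum).
  { replace (2 * n - 1)%nat with (2 * n - 2 * 0 - 1)%nat by lia.
    apply (sum_f_R0_first_le (fun j => lam ^ (2 * n - 2 * j - 1) * wnorm2 (Derive_n g j))).
    intros j. apply Rmult_le_pos; [apply pow_le; lra|].
    apply wnorm2_ge_0, admissible_continuity, admissible_Derive_n, Hg. }
  assert (Hdiv : Ssum / C * C = Ssum) by (field; lra).
  split; apply (Rmult_le_reg_r C); try exact HC; rewrite ?Hdiv.
  - assert (alpha ^ 2 * q ^ 2 * C * wnorm2 g <= lam ^ (2 * n - 1) * wnorm2 g)
      by (apply Rmult_le_compat_r; [apply wnorm2_ge_0, admissible_continuity, Hg | exact Hq]).
    lra.
  - lra.
Qed.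

Lemma slice_estimate n g h alpha q :
  admissible g -> admissible h -> (1 <= n)%nat ->
  INR n * (4 * lam) <= 8 * lam ^ 2 * (x0 - L) ^ 2 ->
  alpha ^ 2 * q ^ 2 * carleman_const n <= lam ^ (2 * n - 1) ->
  sum_f_R0 (fun m => lam ^ (2 * n - 2 * m - 1) * wnorm2 (Derive_n g m)) (n - 1)
    / carleman_const n
  + alpha * (wdot h (Derive_n g n) + 2 * q * wdot g (Derive_n g n) + wdot g (Derive_n h n))
  <= wnorm2 (fun x => alpha * h x + Derive_n g n x).
Proof.
  intros Hg Hh Hn Hlarge Hq.
  pose proof (admissible_continuity _ Hg) as Cg.
  pose proof (admissible_continuity _ Hh) as Ch.
  pose proof (admissible_continuity _ (admissible_Derive_n _ n Hg)) as CY.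
  pose proof (admissible_continuity _ (admissible_adj_iter n _ Hg)) as CZ.
  rewrite (wnorm2_add_completed_squares g h (Derive_n g n) (adj_iter n g) alpha q) by assumption.
  rewrite !wdot_adj_iter by assumption.
  pose proof (wnorm2_ge_0 (fun x => alpha * h x + Derive_n g n x - alpha * q * g x))
    as HP. pose proof (wnorm2_ge_0 (fun x => alpha * (h x + q * g x) - adj_iter n g x)) as HQ.
  destruct (weighted_sum_div_bounds g n alpha q Hg Hn Hq) as [Hlow Hup].
  destruct n as [|m]; [lia|].
  replace (Derive_n g (S m - 1)) with (Derive_n g m) in Hup by (f_equal; lia).
  assert (Hgap : 4 * lam * wnorm2 (Derive_n g m)
                 <= wnorm2 (Derive_n g (S m)) - wnorm2 (adj_iter (S m) g)).
  { apply wnorm2_Derive_n_gap; [assumption|]. rewrite S_INR in Hlarge. lra. }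
  assert (0 <= wnorm2 (fun x => alpha * h x + Derive_n g (S m) x - alpha * q * g x))
    by (apply HP; continuity_tac).
  assert (0 <= wnorm2 (fun x => alpha * (h x + q * g x) - adj_iter (S m) g x))
    by (apply HQ; continuity_tac).
  lra.
Qed.

End Weighted_line.

Lemma continuity_sum_f_R0 (f : nat -> R -> R) N :
  (forall m, continuity (f m)) -> continuity (fun t => sum_f_R0 (fun m => f m t) N).
Proof.
  intros H. induction N as [|N IH]; simpl; [apply H|].
  apply (continuity_plus _ (f (S N))); auto.
Qed.

Lemma RInt_sum_f_R0 (f : nat -> R -> R) N a b : (forall m, continuity (f m)) ->
  RInt (fun t => sum_f_R0 (fun m => f m t) N) a b = sum_f_R0 (fun m => RInt (f m) a b) N.
Proof.
  intros H. induction N as [|N IH]; simpl; [reflexivity|].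
  rewrite RInt_plus_R, IH; [reflexivity|..]; apply ex_RInt_continuity;
    auto using continuity_sum_f_R0.
Qed.

Definition continuous2 (f : R -> R -> R) := forall t x, continuity_2d_pt f t x.

Lemma continuous2_plus f g :
  continuous2 f -> continuous2 g -> continuous2 (fun t x => f t x + g t x).
Proof. intros Hf Hg t x. apply continuity_2d_pt_plus; auto. Qed.

Lemma continuous2_minus f g :
  continuous2 f -> continuous2 g -> continuous2 (fun t x => f t x - g t x).
Proof. intros Hf Hg t x. apply continuity_2d_pt_minus; auto. Qed.

Lemma continuous2_mult f g :
  continuous2 f -> continuous2 g -> continuous2 (fun t x => f t x * g t x).
Proof. intros Hf Hg t x. apply continuity_2d_pt_mult; auto. Qed.

Lemma continuous2_opp f : continuous2 f -> continuous2 (fun t x => - f t x).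
Proof. intros Hf t x. apply continuity_2d_pt_opp; auto. Qed.

Lemma continuous2_const c : continuous2 (fun _ _ => c).
Proof. intros t x. apply continuity_2d_pt_const. Qed.

Lemma continuous2_fst : continuous2 (fun t _ => t).
Proof. intros t x. apply continuity_2d_pt_id1. Qed.

Lemma continuous2_snd : continuous2 (fun _ x => x).
Proof. intros t x. apply continuity_2d_pt_id2. Qed.

Lemma continuous2_pow f j : continuous2 f -> continuous2 (fun t x => f t x ^ j).
Proof.
  intros Hf. induction j; simpl; [apply continuous2_const|].
  apply (continuous2_mult f); assumption.
Qed.

Lemma continuous2_exp f : continuous2 f -> continuous2 (fun t x => exp (f t x)).
Proof.
  intros Hf t x. apply continuity_1d_2d_pt_comp; [|apply Hf].
  apply (derivable_continuous exp derivable_exp).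
Qed.

Ltac continuity2_tac :=
  lazymatch goal with
  | |- continuous2 (fun _ _ => ?c) => apply continuous2_const
  | |- continuous2 (fun t _ => t) => apply continuous2_fst
  | |- continuous2 (fun _ x => x) => apply continuous2_snd
  | |- continuous2 (fun t x => @?f t x + @?g t x) => apply (continuous2_plus f g); continuity2_tac
  | |- continuous2 (fun t x => @?f t x - @?g t x) => apply (continuous2_minus f g); continuity2_tac
  | |- continuous2 (fun t x => @?f t x * @?g t x) => apply (continuous2_mult f g); continuity2_tac
  | |- continuous2 (fun t x => - @?f t x) => apply (continuous2_opp f); continuity2_tac
  | |- continuous2 (fun t x => @?f t x ^ ?j) => apply (continuous2_pow f j); continuity2_tac
  | |- continuous2 (fun t x => exp (@?f t x)) => apply (continuous2_exp f); continuity2_tac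
  | |- continuous2 (fun t x => psi ?a ?b ?c t x) => unfold psi; continuity2_tac
  | |- _ => try assumption
  end.

Lemma continuity_slice f t : continuous2 f -> continuity (fun x => f t x).
Proof.
  intros H x eps Heps. destruct (H t x (mkposreal eps Heps)) as [delta Hdelta].
  exists delta. split; [apply cond_pos|]. intros y [_ Hy]. apply Hdelta; [|exact Hy].
  rewrite Rminus_eq_0, Rabs_R0. apply cond_pos.
Qed.

Lemma continuity_RInt_param f a b :
  a <= b -> continuous2 f -> continuity (fun s => RInt (fun x => f s x) a b).
Proof.
  intros Hab Hf t eps Heps.
  assert (He : 0 < eps / (b - a + 1)) by (apply Rdiv_lt_0_compat; lra).
  destruct (uniform_continuity_2d_1d (fun x s => f s x) a b t) with (eps := mkposreal _ He)
    as [delta Hdelta].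
  { intros x _ e. destruct (Hf t x e) as [r Hr]. exists r. intros u v Hu Hv. apply Hr; auto. }
  exists delta. split; [apply cond_pos|]. intros s [_ Hs]. simpl in Hs. unfold R_dist in Hs.
  simpl. unfold R_dist.
  rewrite <- RInt_minus_R by (apply ex_RInt_continuity, continuity_slice, Hf).
  apply Rle_lt_trans with ((b - a) * (eps / (b - a + 1))).
  - apply abs_RInt_le_const; [assumption| |].
    + apply ex_RInt_continuity. apply (continuity_minus (fun x => f s x) (fun x => f t x));
        apply continuity_slice, Hf.
    + intros u Hu. left. apply Rabs_def2 in Hs. pose proof (cond_pos delta).
      apply (Hdelta u t u s); [exact Hu | lra | exact Hu | lra |].
      rewrite Rminus_eq_0, Rabs_R0. apply cond_pos.
  - apply Rlt_le_trans with ((b - a + 1) * (eps / (b - a + 1))).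
    + apply Rmult_lt_compat_r; [assumption | lra].
    + right. field. lra.
Qed.

Lemma pder_app l1 l2 f : pder (l1 ++ l2) f = pder l1 (pder l2 f).
Proof. induction l1 as [|b l1 IH]; simpl; [reflexivity|]. rewrite IH. reflexivity. Qed.

Lemma smooth2_pder l f : smooth2 f -> smooth2 (pder l f).
Proof. intros H l' t x. rewrite <- pder_app. apply H. Qed.

Lemma continuous2_pder l f : smooth2 f -> continuous2 (pder l f).
Proof. intros H t x. apply (H l t x). Qed.

Lemma pder_swap l f : smooth2 f -> pder (true :: false :: l) f = pder (false :: true :: l) f.
Proof.
  intros H. apply functional_extensionality; intro t.
  apply functional_extensionality; intro x. simpl.
  pose proof (smooth2_pder l f H) as HG. set (G := pder l f) in *.
  apply (Schwarz G t x).
  - exists (mkposreal 1 Rlt_0_1). intros u v _ _.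
    repeat split; [apply (HG nil u v) | apply (HG nil u v)
                  | apply (HG (false :: nil) u v) | apply (HG (true :: nil) u v)].
  - apply (HG (true :: false :: nil) t x).
  - apply (HG (false :: true :: nil) t x).
Qed.

Lemma pder_t_repeat_x k f :
  smooth2 f -> pder (true :: repeat false k) f = pder (repeat false k ++ true :: nil) f.
Proof.
  intros H. induction k as [|k IH]; [reflexivity|].
  change (repeat false (S k)) with (false :: repeat false k).
  rewrite pder_swap by assumption. simpl. rewrite <- IH. reflexivity.
Qed.

Lemma Derive_n_pder k l f t :
  Derive_n (fun y => pder l f t y) k = fun x => pder (repeat false k ++ l) f t x.
Proof.
  induction k as [|k IH]; [reflexivity|].
  apply functional_extensionality; intro x. simpl. rewrite IH. reflexivity.
Qed.

Definition x_supported c d (f : R -> R -> R) := forall t x, ~ (c <= x <= d) -> f t x = 0.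

Lemma Derive_outside (f : R -> R) c d x :
  (forall y, ~ (c <= y <= d) -> f y = 0) -> ~ (c <= x <= d) -> Derive f x = 0.
Proof.
  intros Hf Hx. rewrite <- (Derive_const 0 x). apply Derive_ext_loc.
  assert (Hout : x < c \/ d < x) by lra.
  apply (filter_imp (fun y => y < c \/ d < y)).
  - intros y Hy. apply Hf. lra.
  - apply (open_or _ _ (open_lt c) (open_gt d)), Hout.
Qed.

Lemma x_supported_pder c d l f : x_supported c d f -> x_supported c d (pder l f).
Proof.
  intros Hf. induction l as [|[|] l IH]; intros t x Hx; simpl; [now apply Hf| |].
  - rewrite (Derive_ext _ (fun _ => 0)) by (intro; apply IH, Hx). apply Derive_const.
  - apply (Derive_outside _ c d); [intros y Hy; apply IH|]; assumption.
Qed.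

Lemma admissible_slice c d L l f t : smooth2 f -> x_supported c d f -> 0 < c -> d < L ->
  admissible L (fun y => pder l f t y).
Proof.
  intros Hs Hsupp Hc HdL. split.
  - intros j x. rewrite Derive_n_pder. apply (Hs (repeat false j ++ l) t x).
  - intros j. rewrite Derive_n_pder.
    split; apply (x_supported_pder c d _ f Hsupp); lra.
Qed.

(* [d/ds (e^{2 lam psi} v d_x^n v)], expanded. *)
Definition time_flux lam x0 t0 beta v n s x :=
  exp (2 * lam * psi x0 t0 beta s x) *
  (2 * (lam * (-2 * beta * (s - t0))) * (v s x * pder (repeat false n) v s x)
   + (pder (true :: nil) v s x * pder (repeat false n) v s x
      + v s x * pder (true :: repeat false n) v s x)).

Lemma is_derive_time_flux lam x0 t0 beta v n s x : smooth2 v ->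
  is_derive (fun u => exp (2 * lam * psi x0 t0 beta u x) * (v u x * pder (repeat false n) v u x)) s
    (time_flux lam x0 t0 beta v n s x).
Proof.
  intros H.
  assert (Hexp : is_derive (fun u => exp (2 * lam * psi x0 t0 beta u x)) s
                   (exp (2 * lam * psi x0 t0 beta s x) * (2 * (lam * (-2 * beta * (s - t0)))))).
  { unfold psi. auto_derive; [auto|].
    match goal with |- _ * exp ?A = exp ?B * _ => replace A with B by ring end. ring. }
  pose proof (Derive_correct (fun u : R => v u x) s (proj1 (H nil s x))) as Hv.
  pose proof (Derive_correct (fun u : R => pder (repeat false n) v u x) s
                (proj1 (H (repeat false n) s x))) as Hvn.
  pose proof (is_derive_mult_R _ _ _ _ _ Hexp (is_derive_mult_R _ _ _ _ _ Hv Hvn)) as Hprod.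
  refine (is_derive_eq_R _ _ _ _ Hprod _).
  unfold time_flux. cbn [pder]. ring.
Qed.

Lemma continuous2_time_flux lam x0 t0 beta v n :
  smooth2 v -> continuous2 (time_flux lam x0 t0 beta v n).
Proof.
  intros H. unfold time_flux.
  pose proof (continuous2_pder nil v H) as C0.
  pose proof (continuous2_pder (repeat false n) v H) as Cn.
  pose proof (continuous2_pder (true :: nil) v H) as Ct.
  pose proof (continuous2_pder (true :: repeat false n) v H) as Ctn.
  continuity2_tac.
Qed.

Lemma RInt_RInt_time_flux lam x0 t0 beta v n L T : 0 <= L -> smooth2 v ->
  (forall x, v 0 x = 0) -> (forall x, v T x = 0) ->
  RInt (fun t => RInt (fun x => time_flux lam x0 t0 beta v n t x) 0 L) 0 T = 0.
Proof.
  intros HL Hs H0 HT.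
  set (F := fun s x => exp (2 * lam * psi x0 t0 beta s x) * (v s x * pder (repeat false n) v s x)).
  assert (CF : continuous2 F).
  { unfold F. pose proof (continuous2_pder nil v Hs) as C0.
    pose proof (continuous2_pder (repeat false n) v Hs) as Cn. continuity2_tac. }
  assert (DF : forall s x, Derive (fun u => F u x) s = time_flux lam x0 t0 beta v n s x)
    by (intros; apply is_derive_unique, is_derive_time_flux, Hs).
  apply (RInt_derive_vanishing (fun t => RInt (fun x => F t x) 0 L)).
  - intro t. eapply is_derive_eq_R; [apply (is_derive_RInt_param F 0 L t)|].
    + exists (mkposreal 1 Rlt_0_1). intros y _ x _. eexists. apply is_derive_time_flux, Hs.
    + intros x _. apply (continuity_2d_pt_ext (time_flux lam x0 t0 beta v n)).
      * intros; symmetry; apply DF.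
      * apply continuous2_time_flux, Hs.
    + exists (mkposreal 1 Rlt_0_1). intros y _.
      apply ex_RInt_continuity, continuity_slice, CF.
    + apply RInt_ext_R. intro x. apply DF.
  - apply continuity_RInt_param; [assumption|]. apply continuous2_time_flux, Hs.
  - rewrite (RInt_ext_R _ (fun _ => 0)); [apply RInt_zero|]. intro x. unfold F. rewrite H0. ring.
  - rewrite (RInt_ext_R _ (fun _ => 0)); [apply RInt_zero|]. intro x. unfold F. rewrite HT. ring.
Qed.

Lemma time_slice_estimate lam x0 t0 beta v n L c d alpha t :
  smooth2 v -> x_supported c d v -> 0 < c -> c <= d -> d < L -> L < x0 -> 0 < lam -> (1 <= n)%nat ->
  INR n * (4 * lam) <= 8 * lam ^ 2 * (x0 - L) ^ 2 ->
  alpha ^ 2 * (lam * (-2 * beta * (t - t0))) ^ 2 * carleman_const x0 L n <= lam ^ (2 * n - 1) ->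
  sum_f_R0 (fun m => lam ^ (2 * n - 2 * m - 1) *
      RInt (fun x => exp (2 * lam * psi x0 t0 beta t x) * dxn m v t x ^ 2) 0 L) (n - 1)
    / carleman_const x0 L n
  + alpha * RInt (fun x => time_flux lam x0 t0 beta v n t x) 0 L
  <= RInt (fun x => exp (2 * lam * psi x0 t0 beta t x) * (alpha * dt v t x + dxn n v t x) ^ 2) 0 L.
Proof.
  intros Hs Hsupp Hc Hcd HdL HLx0 Hlam Hn Hlarge Hq.
  set (k := - (beta * (t - t0) ^ 2)).
  assert (Hw : forall x, exp (2 * lam * psi x0 t0 beta t x) = weight lam x0 k x) by reflexivity.
  set (g := fun y => pder nil v t y). set (h := fun y => pder (true :: nil) v t y).
  assert (Hg : admissible L g) by (apply (admissible_slice c d); assumption).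
  assert (Hh : admissible L h) by (apply (admissible_slice c d); assumption).
  assert (EY : forall x, Derive_n g n x = pder (repeat false n) v t x)
    by (intro; unfold g; rewrite Derive_n_pder, app_nil_r; reflexivity).
  assert (EDh : forall x, Derive_n h n x = pder (true :: repeat false n) v t x)
    by (intro; unfold h; rewrite Derive_n_pder, pder_t_repeat_x; [reflexivity | assumption]).
  assert (Esum : forall m, RInt (fun x => exp (2 * lam * psi x0 t0 beta t x) * dxn m v t x ^ 2) 0 L
                           = wnorm2 lam x0 k L (Derive_n g m)).
  { intros m. unfold wnorm2, wdot. apply RInt_ext_R. intro x. rewrite Hw.
    change (dxn m v t x) with (Derive_n g m x). ring. }
  assert (Erhs : RInt (fun x => exp (2 * lam * psi x0 t0 beta t x)
                                 * (alpha * dt v t x + dxn n v t x) ^ 2) 0 L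
                 = wnorm2 lam x0 k L (fun x => alpha * h x + Derive_n g n x)).
  { unfold wnorm2, wdot. apply RInt_ext_R. intro x. rewrite Hw.
    change (dt v t x) with (h x). change (dxn n v t x) with (Derive_n g n x). ring. }
  set (q := lam * (-2 * beta * (t - t0))) in *.
  pose proof (admissible_continuity L g Hg) as Cg.
  pose proof (admissible_continuity L h Hh) as Ch.
  pose proof (admissible_continuity L _ (admissible_Derive_n L g n Hg)) as CY.
  pose proof (admissible_continuity L _ (admissible_Derive_n L h n Hh)) as CDh.
  assert (Eflux : (RInt (fun x => time_flux lam x0 t0 beta v n t x) 0 L : R)
      = wdot lam x0 k L h (Derive_n g n) + 2 * q * wdot lam x0 k L g (Derive_n g n)
        + wdot lam x0 k L g (Derive_n h n)).
  { rewrite (RInt_ext_R _ (wsum lam x0 k ((1, h, Derive_n g n) :: (2 * q, g, Derive_n g n)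
                                         :: (1, g, Derive_n h n) :: nil))).
    - rewrite RInt_wsum; [cbn [wdot_sum]; ring|].
      repeat (apply List.Forall_cons; [cbn [fst snd]; split; assumption|]).
      apply List.Forall_nil.
    - intro x. unfold time_flux. rewrite Hw. simpl wsum. rewrite EY, EDh.
      unfold g, h. simpl. fold q. ring. }
  rewrite (sum_eq _ _ _ (fun m _ => f_equal _ (Esum m))), Erhs, Eflux.
  apply slice_estimate; auto; lra.
Qed.

Lemma dxn_pder m v t x : dxn m v t x = pder (repeat false m) v t x.
Proof.
  unfold dxn. change (fun y => v t y) with (fun y => pder nil v t y).
  rewrite Derive_n_pder, app_nil_r. reflexivity.
Qed.

Lemma continuous2_dxn m v : smooth2 v -> continuous2 (dxn m v).
Proof.
  intros H t x. apply (continuity_2d_pt_ext (pder (repeat false m) v)); [|apply H].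
  intros; symmetry; apply dxn_pder.
Qed.

Lemma int2_weighted_sum lam x0 t0 beta v n T L : 0 <= L -> smooth2 v ->
  sum_f_R0 (fun m => int2 T L (fun t x => lam ^ (2 * n - 2 * m - 1) *
                                 exp (2 * lam * psi x0 t0 beta t x) * dxn m v t x ^ 2)) (n - 1)
  = RInt (fun t => sum_f_R0 (fun m => lam ^ (2 * n - 2 * m - 1) *
      RInt (fun x => exp (2 * lam * psi x0 t0 beta t x) * dxn m v t x ^ 2) 0 L) (n - 1)) 0 T.
Proof.
  intros HL Hs.
  assert (Hdens : forall m,
             continuous2 (fun t x => exp (2 * lam * psi x0 t0 beta t x) * dxn m v t x ^ 2))
    by (intros m; pose proof (continuous2_dxn m v Hs); continuity2_tac).
  rewrite RInt_sum_f_R0.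
  - apply sum_eq. intros m _. unfold int2. apply RInt_ext_R. intro t.
    rewrite <- RInt_scal_R by (apply ex_RInt_continuity; exact (continuity_slice _ t (Hdens m))).
    apply RInt_ext_R. intro x. ring.
  - intros m. apply (continuity_mult (fun _ => _));
      [apply continuity_const; intros ? ?; reflexivity|].
    apply continuity_RInt_param; auto.
Qed.

Lemma carleman_integrated lam x0 t0 beta v n T L alpha :
  0 < L -> L < x0 -> 0 < lam -> (1 <= n)%nat -> C0inf_rect T L v ->
  INR n * (4 * lam) <= 8 * lam ^ 2 * (x0 - L) ^ 2 ->
  (forall t, 0 <= t <= T ->
     alpha ^ 2 * (lam * (-2 * beta * (t - t0))) ^ 2 * carleman_const x0 L n <= lam ^ (2 * n - 1)) ->
  sum_f_R0 (fun m => int2 T L (fun t x => lam ^ (2 * n - 2 * m - 1) *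
                                 exp (2 * lam * psi x0 t0 beta t x) * dxn m v t x ^ 2)) (n - 1)
  <= carleman_const x0 L n *
     int2 T L (fun t x => exp (2 * lam * psi x0 t0 beta t x)
                          * (alpha * dt v t x + dxn n v t x) ^ 2).
Proof.
  intros HL HLx0 Hlam Hn [Hs [a [b [c [d (Ha & Hab & HbT & Hc & Hcd & HdL & Hsupp)]]]]] Hlarge Hq.
  assert (Hx : x_supported c d v) by (intros s x Hx; apply Hsupp; tauto).
  pose proof (carleman_const_pos x0 L HLx0 n Hn) as HC.
  set (C := carleman_const x0 L n) in *.
  rewrite int2_weighted_sum by (auto; lra).
  set (Sf := fun t => sum_f_R0 _ (n - 1)).
  set (Jf := fun t => RInt (fun x => time_flux lam x0 t0 beta v n t x) 0 L).
  set (Rf := fun t => RInt (fun x => exp (2 * lam * psi x0 t0 beta t x)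
                                      * (alpha * dt v t x + dxn n v t x) ^ 2) 0 L).
  assert (CSf : continuity Sf).
  { apply continuity_sum_f_R0. intros m.
    apply (continuity_mult (fun _ => _)); [apply continuity_const; intros ? ?; reflexivity|].
    apply continuity_RInt_param; [lra|].
    pose proof (continuous2_dxn m v Hs). continuity2_tac. }
  assert (CJf : continuity Jf)
    by (apply continuity_RInt_param; [lra | apply continuous2_time_flux, Hs]).
  assert (CRf : continuity Rf).
  { apply continuity_RInt_param; [lra|].
    pose proof (continuous2_dxn n v Hs). pose proof (continuous2_pder (true :: nil) v Hs).
    continuity2_tac. }
  assert (HJ : RInt Jf 0 T = 0).
  { apply RInt_RInt_time_flux; [lra | assumption | |]; intro x; apply Hsupp; lra. }
  assert (Hle : RInt (fun t => / C * Sf t) 0 T <= RInt Rf 0 T).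
  { apply (RInt_le_of_null_defect _ Jf _ 0 T alpha); try assumption; try lra.
    - apply (continuity_mult (fun _ => _)); [apply continuity_const; intros ? ?|]; auto.
    - intros t Ht. rewrite Rmult_comm.
      apply (time_slice_estimate lam x0 t0 beta v n L c d alpha t); auto; lra. }
  rewrite RInt_scal_R in Hle by (apply ex_RInt_continuity, CSf).
  unfold int2. change (RInt (fun t => RInt _ 0 L) 0 T) with (RInt Rf 0 T).
  apply (Rmult_le_reg_l (/ C)); [apply Rinv_0_lt_compat, HC|].
  rewrite <- Rmult_assoc, Rinv_l, Rmult_1_l by lra. exact Hle.
Qed.

Lemma lambda_large_drift x0 L lam (n : nat) : L < x0 -> 0 < lam ->
  INR n / (2 * (x0 - L) ^ 2) <= lam -> INR n * (4 * lam) <= 8 * lam ^ 2 * (x0 - L) ^ 2.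
Proof.
  intros HLx0 Hlam H. assert (Hd : 0 < 2 * (x0 - L) ^ 2) by nra.
  apply (Rmult_le_compat_r (2 * (x0 - L) ^ 2)) in H; [|lra].
  unfold Rdiv in H. rewrite Rmult_assoc, Rinv_l, Rmult_1_r in H by lra.
  nra.
Qed.

Lemma lambda_large_time alpha beta t t0 T K lam (n : nat) :
  (2 <= n)%nat -> 0 <= K -> 1 <= lam -> 0 <= t <= T -> 0 < t0 < T ->
  4 * alpha ^ 2 * beta ^ 2 * T ^ 2 * K <= lam ->
  alpha ^ 2 * (lam * (-2 * beta * (t - t0))) ^ 2 * K <= lam ^ (2 * n - 1).
Proof.
  intros Hn HK Hlam Ht Ht0 Hbig.
  assert (Hc : 0 <= 4 * alpha ^ 2 * beta ^ 2 * K).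
  { apply Rmult_le_pos; [|assumption].
    pose proof (pow2_ge_0 alpha). pose proof (pow2_ge_0 beta). nra. }
  assert (Htt : (t - t0) ^ 2 <= T ^ 2) by nra.
  assert (Hpow : lam ^ 3 <= lam ^ (2 * n - 1)) by (apply Rle_pow; [lra | lia]).
  replace (alpha ^ 2 * (lam * (-2 * beta * (t - t0))) ^ 2 * K)
    with (lam ^ 2 * (4 * alpha ^ 2 * beta ^ 2 * K * (t - t0) ^ 2)) by ring.
  assert (Hsmall : 4 * alpha ^ 2 * beta ^ 2 * K * (t - t0) ^ 2 <= lam).
  { apply Rle_trans with (4 * alpha ^ 2 * beta ^ 2 * K * T ^ 2); [|lra].
    apply Rmult_le_compat_l; assumption. }
  apply Rle_trans with (lam ^ 3); [|exact Hpow].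
  replace (lam ^ 3) with (lam ^ 2 * lam) by ring.
  apply Rmult_le_compat_l; [apply pow2_ge_0 | exact Hsmall].
Qed.

Theorem mainTheorem2 (T L alpha : R) (n : nat) (x0 t0 beta : R)
  (HT : 0 < T) (HL : 0 < L) (Halpha : alpha <> 0) (Hn : (2 <= n)%nat)
  (Hx0 : x0 > L) (Ht0 : 0 < t0 < T) (Hbeta : 0 < beta) :
  exists lambda0 C : R, 0 < lambda0 /\ 0 < C /\
    forall (lambda : R) (v : R -> R -> R),
      lambda > lambda0 -> C0inf_rect T L v ->
      sum_f_R0 (fun m =>
          int2 T L (fun t x =>
            lambda ^ (2 * n - 2 * m - 1) *
            exp (2 * lambda * psi x0 t0 beta t x) * (dxn m v t x) ^ 2))
        (n - 1)
      <= C * int2 T L (fun t x =>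
            exp (2 * lambda * psi x0 t0 beta t x) *
            (alpha * dt v t x + dxn n v t x) ^ 2).
Proof.
  assert (HC : 0 < carleman_const x0 L n) by (apply carleman_const_pos; [lra | lia]).
  set (C := carleman_const x0 L n) in *.
  assert (HB : 0 <= 4 * alpha ^ 2 * beta ^ 2 * T ^ 2 * C).
  { apply Rmult_le_pos; [|lra]. repeat (apply Rmult_le_pos; [|apply pow2_ge_0]). lra. }
  assert (Hd : 0 <= INR n / (2 * (x0 - L) ^ 2))
    by (apply Rdiv_le_0_compat; [apply pos_INR | nra]).
  exists (INR n / (2 * (x0 - L) ^ 2) + 4 * alpha ^ 2 * beta ^ 2 * T ^ 2 * C + 1), C.
  split; [lra|]. split; [exact HC|].
  intros lam v Hlam Hv.
  apply carleman_integrated; try assumption; try lra; try lia.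
  - apply lambda_large_drift; lra.
  - intros t Ht. apply (lambda_large_time _ _ _ _ T C); try lra; lia.
Qed.
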